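(* For every integer $n\ge 5$, $$\mathrm{spt}2'_{do}(n)=p'_{do}(n-4)-p'_{do}(n-3)-p'_{do}(n-2).$$
   Context: For a partition $\pi$, $s(\pi)$ is its smallest part. $\mathrm{Spt}2_{do}(n)$ is the set of partitions $\pi$ of $n$ in which $s(\pi)$ occurs exactly twice and the remaining parts (those larger than $s(\pi)$) are pairwise distinct and each has parity different from that of $s(\pi)$. $\mathrm{spt}2'_{do}(n)$ is the number of such partitions having an even number of parts greater than $s(\pi)$ minus the number having an odd number of such parts. $p'_{do}(n)$ is the number of partitions of $n$ into distinct odd parts with an even number of parts minus the number with an odd number of parts, with $p'_{do}(0)=1$. *)

From mathcomp Require Import all_boot all_order all_algebra.
Set Implicit Arguments. Unset Strict Implicit. Unset Printing Implicit Defensive.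
Import GRing.Theory.
Local Open Scope ring_scope.

Definition is_partition (n : nat) (s : seq nat) : bool :=
  [&& sorted geq s, all (fun x => 0 < x)%N s & sumn s == n].

Fixpoint parts_le (fuel m n : nat) : seq (seq nat) :=
  match fuel with
  | 0%N => if n == 0%N then [:: [::]] else [::]
  | f.+1 =>
      if n == 0%N then [:: [::]]
      else flatten [seq [seq k :: s | s <- parts_le f k (n - k)]
                   | k <- iota 1 (minn m n)]
  end.

(* All partitions of n (a finite list; candidates are then filtered by is_partition
   so that the definition of the counted set is the predicate itself). *)
Definition partitions (n : nat) : seq (seq nat) :=
  [seq s <- undup (parts_le n n n) | is_partition n s].

(* smallest part (of a nonempty partition stored nonincreasingly) *)
Definition smallest (s : seq nat) : nat := last 0%N s.

Definition in_Spt2do (s : seq nat) : bool :=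
  let m := smallest s in
  let big := [seq x <- s | (m < x)%N] in
  [&& s != [::], count_mem m s == 2%N, uniq big
    & all (fun x => odd x != odd m) big].

Definition nbig (s : seq nat) : nat := count (fun x => smallest s < x)%N s.

Definition spt2do' (n : nat) : int :=
  \sum_(s <- partitions n | in_Spt2do s) (-1) ^+ nbig s.

Definition distinct_odd (s : seq nat) : bool := uniq s && all odd s.

Definition pdo' (n : nat) : int :=
  \sum_(s <- partitions n | distinct_odd s) (-1) ^+ size s.

From mathcomp Require Import all_boot all_order all_algebra.
From mathcomp Require Import zify ring.
Set Implicit Arguments. Unset Strict Implicit. Unset Printing Implicit Defensive.
Import GRing.Theory.

(* Group the partitions in Spt2_do(n) by their smallest part m.  Those with
   smallest part m are exactly t ++ [m; m], with t a set of distinct parts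
   larger than m and of the other parity, so their signed count is the
   coefficient of q^n in q^(2m) G m, where G m = (q^(m+1); q^2)_oo.  Since
   G m = (1 - q^(m+1)) G (m+2), the terms q^(2m) G m telescope in steps of two,
   and the sum over m >= 1 collapses to (q^4 - q^3 - q^2) G 0 plus terms of
   degree 2, 4 or > n; G 0 is the generating function of p'_do. *)

Fixpoint subseqs (T : Type) (s : seq T) : seq (seq T) :=
  if s is x :: s' then [seq x :: t | t <- subseqs s'] ++ subseqs s'
  else [:: [::]].

Section Subseqs.
Variable T : eqType.

Lemma nil_in_subseqs (s : seq T) : [::] \in subseqs s.
Proof. by elim: s => [|x s IH] //=; rewrite mem_cat IH orbT. Qed.

Lemma mem_subseqs (s t : seq T) : (t \in subseqs s) = subseq t s.
Proof.
elim: s t => [|x s IH] [|y t] //=; first by rewrite mem_cat nil_in_subseqs orbT.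
rewrite mem_cat IH; have [->|ne_yx] := eqVneq y x.
  have cons_inj : injective (cons x) by move=> u v [].
  rewrite (mem_map cons_inj) IH; apply/orb_idr.
  exact/subseq_trans/subseq_cons.
rewrite orb_idl // => /mapP[u _ [eq_yx]].
by rewrite eq_yx eqxx in ne_yx.
Qed.

Lemma uniq_subseqs (s : seq T) : uniq s -> uniq (subseqs s).
Proof.
elim: s => [|x s IH] //= /andP[x_notin_s /IH uniq_s].
rewrite cat_uniq map_inj_uniq ?uniq_s //=; last by move=> t u [].
rewrite andbT; apply/hasPn => t; rewrite mem_subseqs => sub_ts.
apply/mapP => -[u _ def_t].
by move: x_notin_s; rewrite (mem_subseq sub_ts) // def_t mem_head.
Qed.

End Subseqs.

Lemma gtn_trans : transitive gtn.
Proof. by move=> y x z /[swap]; apply: ltn_trans. Qed.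

Lemma geq_trans : transitive geq.
Proof. by move=> y x z /[swap]; apply: leq_trans. Qed.

Lemma subseq_gtn_sortedE (s t : seq nat) : sorted gtn s ->
  subseq t s = sorted gtn t && all (mem s) t.
Proof.
move=> sorted_s; apply/idP/andP => [sub_ts|[sorted_t /allP t_sub_s]].
  split; first by have := subseq_sorted gtn_trans sub_ts sorted_s.
  by apply/allP => x; apply: mem_subseq.
have uniq_gtn u : sorted gtn u -> uniq u := sorted_uniq gtn_trans ltnn (s := u).
suff -> : t = [seq x <- s | x \in t] by apply: filter_subseq.
apply: (sorted_eq gtn_trans) => //.
- by move=> x y /andP[/ltn_trans lt_yx /lt_yx]; rewrite ltnn.
- exact: sorted_filter gtn_trans _ _ sorted_s.
apply: uniq_perm; rewrite ?filter_uniq ?uniq_gtn // => x.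
by rewrite mem_filter andb_idr //; apply: t_sub_s.
Qed.

Local Open Scope ring_scope.

Section ProdSubseqs.
Variables (R : pzRingType) (x : R).

Lemma prod_1BX_subseqs (s : seq nat) :
  \prod_(k <- s) (1 - x ^+ k) =
  \sum_(t <- subseqs s) (-1) ^+ size t * x ^+ sumn t.
Proof.
elim: s => [|k s IH]; first by rewrite big_nil big_seq1 mulr1.
rewrite big_cons IH /= big_cat big_map /= mulrBl mul1r addrC mulr_sumr -sumrN.
congr (_ + _); apply: eq_bigr => t _.
by rewrite exprS mulN1r mulNr mulrA (commr_sign (x ^+ k)) -mulrA -exprD.
Qed.

End ProdSubseqs.

Lemma coef_XnM_prod_1BX (s : seq nat) c n :
  ('X^c * \prod_(k <- s) (1 - 'X^k) : {poly int})`_n =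
  \sum_(t <- subseqs s | (sumn t + c == n)%N) (-1) ^+ size t.
Proof.
rewrite prod_1BX_subseqs mulr_sumr coef_sum [RHS]big_mkcond.
apply: eq_bigr => t _.
rewrite mulrCA -exprD -polyC1 -polyCN -rmorphXn coefCM coefXn addnC eq_sym.
by case: eqP => _; rewrite ?mulr1 ?mulr0.
Qed.

Local Close Scope ring_scope.

Lemma leq_sumn_mem s x : x \in s -> x <= sumn s.
Proof.
elim: s => [|y s IH] //=; rewrite inE => /predU1P[->|/IH]; first exact: leq_addr.
by move/leq_trans; apply; apply: leq_addl.
Qed.

Lemma mem_parts_le f m n s :
  n <= f -> sorted geq s -> all (fun x => 0 < x) s -> all (fun x => x <= m) s ->
  sumn s = n -> s \in parts_le f m n.
Proof.
elim: f m n s => [|f IH] m n [|x s] le_nf sorted_s /= pos_s le_m sum_s.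
- by rewrite -sum_s.
- by case/andP: pos_s => x_gt0 _; lia.
- by rewrite -sum_s.
case/andP: pos_s => x_gt0 pos_s; case/andP: le_m => le_xm le_m.
have -> : (n == 0) = false by lia.
apply/flattenP; exists [seq x :: t | t <- parts_le f x (n - x)].
  apply/mapP; exists x => //.
  by rewrite mem_iota x_gt0 add1n ltnS leq_min le_xm -sum_s leq_addr.
apply/map_f/IH => //; try lia.
- exact: path_sorted sorted_s.
- exact: order_path_min geq_trans sorted_s.
Qed.

Lemma mem_partitions n s : (s \in partitions n) = is_partition n s.
Proof.
rewrite mem_filter mem_undup; apply/andb_idr => /and3P[sorted_s pos_s /eqP sum_s].
apply: mem_parts_le => //; apply/allP => x x_in_s.
by rewrite -sum_s leq_sumn_mem.
Qed.

Lemma uniq_partitions n : uniq (partitions n).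
Proof. by rewrite filter_uniq ?undup_uniq. Qed.

Definition parts_above m K :=
  [seq x <- rev (iota 1 K) | (m < x) && (odd x != odd m)].

Lemma mem_parts_above m K x :
  (x \in parts_above m K) = [&& m < x, x <= K & odd x != odd m].
Proof.
rewrite mem_filter mem_rev mem_iota add1n ltnS.
by case: (ltnP m x) => // lt_mx; rewrite (leq_ltn_trans _ lt_mx) // andbC.
Qed.

Lemma sorted_parts_above m K : sorted gtn (parts_above m K).
Proof. by apply: (sorted_filter gtn_trans); rewrite rev_sorted iota_ltn_sorted. Qed.

Lemma uniq_parts_above m K : uniq (parts_above m K).
Proof. by rewrite filter_uniq ?rev_uniq ?iota_uniq. Qed.

Lemma mem_subseqs_parts_above m K t :
  (t \in subseqs (parts_above m K)) =
  [&& sorted gtn t, all (fun x => m < x) t, all (fun x => x <= K) t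
    & all (fun x => odd x != odd m) t].
Proof.
rewrite mem_subseqs subseq_gtn_sortedE ?sorted_parts_above // -!all_predI.
by congr (_ && _); apply: eq_all => x; rewrite /= mem_parts_above.
Qed.

Local Open Scope ring_scope.

(* The truncated q-Pochhammer symbol (q^(m+1); q^2)_oo, keeping the factors of
   degree at most K. *)
Definition poch_above K m : {poly int} := \prod_(k <- parts_above m K) (1 - 'X^k).

Lemma pdo'_coef K k : (k <= K)%N -> pdo' k = (poch_above K 0)`_k.
Proof.
move=> le_kK; rewrite -[poch_above K 0]mul1r -(expr0 'X) coef_XnM_prod_1BX /pdo'.
rewrite -big_filter -[RHS]big_filter; apply/perm_big/uniq_perm.
- by rewrite filter_uniq ?uniq_partitions.
- by rewrite filter_uniq ?uniq_subseqs ?uniq_parts_above.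
move=> s; rewrite mem_filter mem_partitions mem_filter.
rewrite mem_subseqs_parts_above addn0.
rewrite gtn_sorted_uniq_geq /distinct_odd /is_partition.
have [sum_s|] := eqVneq (sumn s) k; last by rewrite !andbF.
have -> : all (fun x => x <= K)%N s.
  by apply/allP => x /leq_sumn_mem; rewrite sum_s => /leq_trans; apply.
have -> : all (fun x => odd x != odd 0)%N s = all odd s.
  by apply: eq_all => x; case: odd.
by case: (uniq s); case: (sorted geq s); case: (all odd s); case: (all _ s).
Qed.

Local Close Scope ring_scope.

Lemma smallest_min s : sorted geq s -> all (fun x => smallest s <= x) s.
Proof.
case: s => //= x s; elim: s x => [|y s IH] x /=; first by rewrite leqnn.
case/andP=> le_yx /IH /= /andP[le_last_y ->].
by rewrite le_last_y (leq_trans le_last_y le_yx).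
Qed.

Lemma sorted_geq_split s m : sorted geq s -> all (fun x => m <= x) s ->
  s = [seq x <- s | m < x] ++ nseq (count_mem m s) m.
Proof.
elim: s => [|x s IH] //= sorted_xs /andP[le_mx ge_m_s].
rewrite {1}IH ?(path_sorted sorted_xs) //.
case: ltnP => [lt_mx|le_xm]; first by rewrite (gtn_eqF lt_mx).
have le_s_m : all (fun y => y <= m) s.
  apply/allP => y y_in_s; apply: leq_trans le_xm.
  exact: (allP (order_path_min geq_trans sorted_xs)).
have -> : x = m by apply/eqP; rewrite eqn_leq le_xm.
rewrite eqxx (eq_in_filter (a2 := pred0)) ?filter_pred0 // => y /(allP le_s_m).
by rewrite /= ltnNge => ->.
Qed.

Lemma in_Spt2do_split s : sorted geq s -> in_Spt2do s ->
  s = [seq x <- s | smallest s < x] ++ [:: smallest s; smallest s].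
Proof.
move=> sorted_s /and4P[_ /eqP count2 _ _].
by rewrite {1}(sorted_geq_split sorted_s (smallest_min sorted_s)) count2.
Qed.

Section PairOfSmallestParts.
Variables (m : nat) (t : seq nat).
Hypothesis t_gt_m : all (fun x => m < x) t.

Let s := t ++ [:: m; m].

Lemma smallest_cat_pair : smallest s = m.
Proof. by rewrite /smallest last_cat. Qed.

Lemma filter_gt_cat_pair : [seq x <- s | m < x] = t.
Proof. by rewrite filter_cat /= ltnn cats0; apply/all_filterP. Qed.

Lemma nbig_cat_pair : nbig s = size t.
Proof. by rewrite /nbig smallest_cat_pair -size_filter filter_gt_cat_pair. Qed.

Lemma in_Spt2do_cat_pair :
  in_Spt2do s = uniq t && all (fun x => odd x != odd m) t.
Proof.
rewrite /in_Spt2do smallest_cat_pair filter_gt_cat_pair count_cat /= eqxx.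
have -> : count_mem m t = 0.
  by apply/count_memPn/negP => /(allP t_gt_m); rewrite ltnn.
by rewrite /s; case: (t).
Qed.

Lemma is_partition_cat_pair n : 0 < m -> sorted gtn t ->
  is_partition n s = (sumn t + 2 * m == n).
Proof.
move=> m_gt0 sorted_t; rewrite /is_partition sumn_cat /= addn0 mul2n -addnn.
have -> : sorted geq s.
  rewrite (sorted_pairwise geq_trans) pairwise_cat -!(sorted_pairwise geq_trans).
  rewrite (sub_sorted (fun x y => @ltnW y x) sorted_t) /= leqnn !andbT.
  by apply/allP => x /(allP t_gt_m) /ltnW /= ->.
rewrite all_cat /= m_gt0 !andbT; apply/andb_idl => _.
by apply/allP => x /(allP t_gt_m) /(leq_ltn_trans (leq0n m)).
Qed.

End PairOfSmallestParts.

Lemma sum_Spt2do_smallest K n m : 0 < m -> n <= K ->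
  (\sum_(s <- partitions n | in_Spt2do s && (smallest s == m)) (-1) ^+ nbig s =
   ('X^(2 * m) * poch_above K m)`_n)%R.
Proof.
move=> m_gt0 le_nK; rewrite coef_XnM_prod_1BX -big_filter -[RHS]big_filter.
set T := [seq t <- subseqs _ | _].
have T_gt_m t : t \in T -> all (fun x => m < x) t.
  by rewrite mem_filter mem_subseqs_parts_above => /and3P[_ _ /andP[]].
transitivity (\sum_(s <- [seq t ++ [:: m; m] | t <- T]) (-1) ^+ nbig s : int)%R;
  last by rewrite big_map; apply: eq_big_seq => t /T_gt_m/nbig_cat_pair ->.
apply/perm_big/uniq_perm.
- by rewrite filter_uniq ?uniq_partitions.
- rewrite map_inj_in_uniq ?filter_uniq ?uniq_subseqs ?uniq_parts_above //.
  move=> t u /T_gt_m t_gt_m /T_gt_m u_gt_m eq_tu.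
  by rewrite -(filter_gt_cat_pair t_gt_m) eq_tu filter_gt_cat_pair.
move=> s; rewrite mem_filter mem_partitions; apply/idP/mapP.
  case/andP=> /andP[Spt_s /eqP small_s] part_s.
  have sorted_s : sorted geq s by case/and3P: part_s.
  set t := [seq x <- s | m < x].
  have def_s : s = t ++ [:: m; m].
    by rewrite {1}(in_Spt2do_split sorted_s Spt_s) small_s.
  exists t => //.
  have t_gt_m : all (fun x => m < x) t by apply: filter_all.
  move: Spt_s part_s; rewrite def_s in_Spt2do_cat_pair // => /andP[uniq_t odd_t].
  have sorted_t : sorted gtn t.
    by rewrite gtn_sorted_uniq_geq uniq_t (sorted_filter geq_trans).
  rewrite is_partition_cat_pair // => /eqP sum_t.
  rewrite mem_filter mem_subseqs_parts_above.
  rewrite sorted_t t_gt_m odd_t sum_t eqxx !andbT.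
  apply/allP => x /leq_sumn_mem le_x_sum; apply: leq_trans le_nK; lia.
case=> t T_t ->; have t_gt_m := T_gt_m t T_t.
move: T_t; rewrite mem_filter mem_subseqs_parts_above.
case/andP=> sum_t /and4P[sorted_t _ _ odd_t].
rewrite smallest_cat_pair eqxx in_Spt2do_cat_pair // is_partition_cat_pair //.
by rewrite sum_t odd_t !andbT (sorted_uniq gtn_trans ltnn sorted_t).
Qed.

Lemma spt2do'_coef K n : n <= K ->
  spt2do' n = (\sum_(1 <= m < n.+1) ('X^(2 * m) * poch_above K m)`_n)%R.
Proof.
move=> le_nK; rewrite /spt2do'.
under [RHS]eq_big_nat => m /andP[m_gt0 _]
  do rewrite -(sum_Spt2do_smallest m_gt0 le_nK) big_mkcondr.
rewrite exchange_big /= big_seq_cond [RHS]big_seq_cond; apply: eq_bigr.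
move=> s /andP[]; rewrite mem_partitions => /and3P[_ pos_s /eqP sum_s] Spt_s.
rewrite -big_mkcond -big_filter (eq_filter (a2 := pred1 (smallest s))) => [|m];
  last by rewrite /= eq_sym.
have small_in_s : smallest s \in s.
  have /and4P[s_neq0 _ _ _] := Spt_s.
  by case: s s_neq0 {pos_s sum_s Spt_s} => // x s _; apply: mem_last.
rewrite filter_pred1_uniq ?iota_uniq ?big_seq1 // mem_iota (allP pos_s) //=.
by rewrite subn1 add1n ltnS -sum_s leq_sumn_mem.
Qed.

Local Open Scope ring_scope.

Lemma poch_above_rec K m : (m < K)%N ->
  poch_above K m = (1 - 'X^(m.+1)) * poch_above K m.+2.
Proof.
move=> lt_mK; rewrite /poch_above (perm_big (m.+1 :: parts_above m.+2 K)).
  by rewrite big_cons.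
apply: uniq_perm.
- exact: uniq_parts_above.
- by rewrite /= uniq_parts_above mem_parts_above andbT; lia.
by move=> y; rewrite in_cons !mem_parts_above; apply/idP/idP; lia.
Qed.

Lemma poch_above_top K m : (K <= m)%N -> poch_above K m = 1.
Proof.
move=> le_Km; rewrite /poch_above big_seq big1 // => k.
by rewrite mem_parts_above; lia.
Qed.

Section TelescopingByTwo.
Variables (R : comPzRingType) (x : R).

(* The weight w with x^(2m) G m = w m * G m - w (m+2) * G (m+2) whenever
   G m = (1 - x^(m+1)) * G (m+2). *)
Definition tele_weight m : R := x ^+ (2 * m) - x ^+ (m + 3) + x ^+ 4 - x ^+ 2.

Lemma tele_weight_step (G : nat -> R) m : G m = (1 - x ^+ m.+1) * G m.+2 ->
  x ^+ (2 * m) * G m = tele_weight m * G m - tele_weight m.+2 * G m.+2.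
Proof.
move=> ->; rewrite /tele_weight.
have -> : (2 * m.+2 = m + m + 4)%N by lia.
by rewrite mul2n -addnn !exprD !exprS; ring.
Qed.

Lemma sum_tele_weight (G : nat -> R) M :
  (forall m, (m <= M)%N -> G m = (1 - x ^+ m.+1) * G m.+2) ->
  \sum_(1 <= m < M.+1) x ^+ (2 * m) * G m =
  (x ^+ 4 - x ^+ 3 - x ^+ 2) * G 0
  - (tele_weight M.+1 * G M.+1 + tele_weight M.+2 * G M.+2).
Proof.
move=> recG.
pose h m := tele_weight m * G m + tele_weight m.+1 * G m.+1.
rewrite (telescope_sumr_eq (fun m => - h m)) // => [|m /andP[_ le_mM]].
  by rewrite /h (recG 0%N) // /tele_weight /=; ring.
by rewrite /h (tele_weight_step (recG m le_mM)); ring.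
Qed.

End TelescopingByTwo.

Lemma coef_tele_weight m n :
  (4 < n < m + 3)%N -> (tele_weight 'X m : {poly int})`_n = 0.
Proof.
move=> /andP[gt4_n lt_n_m3]; rewrite /tele_weight !(coefB, coefD, coefXn).
have -> : (n == 2 * m)%N = false by lia.
have -> : (n == m + 3)%N = false by lia.
have -> : (n == 4)%N = false by lia.
by have -> : (n == 2)%N = false by lia.
Qed.

Theorem corollary8 (n : nat) (hn : (5 <= n)%N) :
  spt2do' n = pdo' (n - 4) - pdo' (n - 3) - pdo' (n - 2).
Proof.
rewrite (spt2do'_coef (leqnSn n)) -coef_sum.
rewrite (sum_tele_weight (G := poch_above n.+1)) => [|m le_mn]; last first.
  by apply: poch_above_rec; rewrite ltnS.
rewrite (@poch_above_top _ n.+1) ?(@poch_above_top _ n.+2) // !mulr1.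
rewrite coefB coefD !coef_tele_weight ?subr0 ?addr0; try lia.
rewrite !mulrBl !coefB !coefXnM !(pdo'_coef (K := n.+1)); try lia.
by rewrite !ifF //; lia.
Qed.
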